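(* Let $t$ be a $\lambda\mu$-term and $y$ a $\lambda$-variable. If $(t\;y)$ is normalizable, then $t$ is normalizable.
   Context: $\lambda\mu$-terms: $t::= x\mid \lambda x.t\mid (t\;t)\mid \mu a.t\mid (a\;t)$ over disjoint infinite sets of $\lambda$-variables and $\mu$-variables. Reduction $(\lambda x.u\;v)\triangleright u[x:=v]$, $(\mu a.u\;v)\triangleright\mu a.u[a:=^*v]$ ($u[a:=^*v]$ replaces each subterm $(a\;w)$ of $u$ by $(a\;(w\;v))$); a term is normalizable if it reduces (by the compatible closure of these rules) to a normal form. *)

(* lambda-mu-terms in de Bruijn notation, with two separate
   index spaces: lambda-variables (bound by Lam) and mu-variables (bound by Mu). *)
From Stdlib Require Import Arith Relations.

Inductive term : Type :=
| Var : nat -> term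
| Lam : term -> term
| App : term -> term -> term
| Mu : term -> term
| Named : nat -> term -> term.   (* (a t), a a mu-variable *)

Fixpoint lift_l (k : nat) (t : term) : term :=
  match t with
  | Var n => if n <? k then Var n else Var (S n)
  | Lam u => Lam (lift_l (S k) u)
  | App u v => App (lift_l k u) (lift_l k v)
  | Mu u => Mu (lift_l k u)
  | Named a u => Named a (lift_l k u)
  end.

Fixpoint lift_m (k : nat) (t : term) : term :=
  match t with
  | Var n => Var n
  | Lam u => Lam (lift_m k u)
  | App u v => App (lift_m k u) (lift_m k v)
  | Mu u => Mu (lift_m (S k) u)
  | Named a u => Named (if a <? k then a else S a) (lift_m k u)
  end.

(* t[k := v] for lambda-variable k; the binder for k is removed, so free
   lambda-variables above k are decremented. v is kept correctly lifted
   when going under binders. *)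
Fixpoint subst_l (k : nat) (v : term) (t : term) : term :=
  match t with
  | Var n => if n <? k then Var n else if n =? k then v else Var (pred n)
  | Lam u => Lam (subst_l (S k) (lift_l 0 v) u)
  | App u w => App (subst_l k v u) (subst_l k v w)
  | Mu u => Mu (subst_l k (lift_m 0 v) u)
  | Named a u => Named a (subst_l k v u)
  end.

(* structural substitution t[a :=* v]: every subterm (a w) becomes (a (w v)) *)
Fixpoint subst_m (a : nat) (v : term) (t : term) : term :=
  match t with
  | Var n => Var n
  | Lam u => Lam (subst_m a (lift_l 0 v) u)
  | App u w => App (subst_m a v u) (subst_m a v w)
  | Mu u => Mu (subst_m (S a) (lift_m 0 v) u)
  | Named b u =>
      if b =? a then Named b (App (subst_m a v u) v)
      else Named b (subst_m a v u)
  end.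

Inductive step : term -> term -> Prop :=
| step_beta : forall u v, step (App (Lam u) v) (subst_l 0 v u)
| step_mu : forall u v, step (App (Mu u) v) (Mu (subst_m 0 (lift_m 0 v) u))
| step_lam : forall u u', step u u' -> step (Lam u) (Lam u')
| step_appl : forall u u' v, step u u' -> step (App u v) (App u' v)
| step_appr : forall u v v', step v v' -> step (App u v) (App u v')
| step_mu_c : forall u u', step u u' -> step (Mu u) (Mu u')
| step_named : forall a u u', step u u' -> step (Named a u) (Named a u').

Definition reduces : term -> term -> Prop := clos_refl_trans term step.

Definition normal (t : term) : Prop := forall t', ~ step t t'.

Definition normalizable (t : term) : Prop :=
  exists n, reduces t n /\ normal n.

(* If (t y) reduces to a normal form, pull the reduction back to t. After a
   mu-step, a subterm (a w) of t has become (a (w y)) and may be reduced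
   further, so the reducts of (t y) are instances of reducts of t: terms
   obtained by structural substitutions a :=* y followed by reduction of the
   new applications (w y). Every step of an instance is matched by a reduction
   of the term itself, and a term with a normal instance is normalizable. The
   latter goes by induction on the size of the normal form: an unfolded
   subterm (a r) of it, with (w y) reducing to r, is handled by the theorem
   itself for w and the smaller normal form r. *)

From Stdlib Require Import Arith Relations Lia.

(* Keep index comparisons folded, so that [index_cases] can split on them. *)
Arguments Nat.eqb : simpl never.
Arguments Nat.ltb : simpl never.

Ltac index_cases :=
  repeat (simpl in *; match goal with
  | |- context [?a <? ?b] => destruct (Nat.ltb_spec a b)
  | |- context [?a =? ?b] => destruct (Nat.eqb_spec a b)
  end); simpl in *; try subst; try reflexivity; try (f_equal; lia); try lia.

(** * Algebra of lifting and substitution *)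

Definition lvar_lift (k y : nat) : nat := if y <? k then y else S y.
Definition mvar_lift (k a : nat) : nat := if a <? k then a else S a.

Lemma lift_l_var (k y : nat) : lift_l k (Var y) = Var (lvar_lift k y).
Proof. unfold lvar_lift; simpl; destruct (y <? k); reflexivity. Qed.

Lemma mvar_lift_eqb (k a b : nat) : (mvar_lift k a =? mvar_lift k b) = (a =? b).
Proof.
  unfold mvar_lift; index_cases; destruct (Nat.eqb_spec a b); try lia; reflexivity.
Qed.

Lemma lift_l_lift_l (u : term) (i j : nat) :
  i <= j -> lift_l i (lift_l j u) = lift_l (S j) (lift_l i u).
Proof.
  revert i j; induction u; intros i j H; simpl;
    try (f_equal; auto; apply IHu; lia); index_cases.
Qed.

Lemma lift_l_lift_m (u : term) (i j : nat) :
  lift_l i (lift_m j u) = lift_m j (lift_l i u).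
Proof. revert i j; induction u; intros; simpl; f_equal; auto; index_cases. Qed.

Lemma lift_m_lift_m (u : term) (i j : nat) :
  i <= j -> lift_m i (lift_m j u) = lift_m (S j) (lift_m i u).
Proof.
  revert i j; induction u; intros i j H; simpl;
    try (f_equal; auto; apply IHu; lia); f_equal; auto; index_cases.
Qed.

Lemma subst_l_lift_l (u v : term) (k : nat) : subst_l k v (lift_l k u) = u.
Proof. revert k v; induction u; intros; simpl; try (f_equal; auto; fail); index_cases. Qed.

Lemma subst_m_lift_m (u v : term) (c : nat) : subst_m c v (lift_m c u) = lift_m c u.
Proof.
  revert c v; induction u; intros; simpl; try (f_equal; auto; fail).
  fold (mvar_lift c n). replace (mvar_lift c n =? c) with false.
  - f_equal; auto.
  - unfold mvar_lift; index_cases; symmetry; apply Nat.eqb_neq; lia.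
Qed.

Lemma lift_l_subst_l_le (u v : term) (i k : nat) :
  i <= k -> lift_l i (subst_l k v u) = subst_l (S k) (lift_l i v) (lift_l i u).
Proof.
  revert i k v; induction u; intros i k v H; simpl; f_equal; auto.
  - index_cases.
  - rewrite IHu, (lift_l_lift_l v 0 i) by lia; reflexivity.
  - rewrite IHu, lift_l_lift_m by lia; reflexivity.
Qed.

Lemma lift_l_subst_l_ge (u v : term) (i k : nat) :
  k <= i -> lift_l i (subst_l k v u) = subst_l k (lift_l i v) (lift_l (S i) u).
Proof.
  revert i k v; induction u; intros i k v H; simpl; f_equal; auto.
  - index_cases.
  - rewrite IHu, (lift_l_lift_l v 0 i) by lia; reflexivity.
  - rewrite IHu, lift_l_lift_m by lia; reflexivity.
Qed.

Lemma lift_l_subst_m (u v : term) (k a : nat) :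
  lift_l k (subst_m a v u) = subst_m a (lift_l k v) (lift_l k u).
Proof.
  revert k a v; induction u; intros; simpl.
  - index_cases.
  - rewrite IHu, (lift_l_lift_l v 0 k) by lia; reflexivity.
  - f_equal; auto.
  - rewrite IHu, lift_l_lift_m; reflexivity.
  - destruct (n =? a); simpl; rewrite IHu; reflexivity.
Qed.

Lemma lift_m_subst_l (u v : term) (k j : nat) :
  lift_m k (subst_l j v u) = subst_l j (lift_m k v) (lift_m k u).
Proof.
  revert k j v; induction u; intros; simpl; f_equal; auto.
  - index_cases.
  - rewrite IHu, lift_l_lift_m; reflexivity.
  - rewrite IHu, (lift_m_lift_m v 0 k) by lia; reflexivity.
Qed.

Lemma lift_m_subst_m (u v : term) (k a : nat) :
  lift_m k (subst_m a v u) = subst_m (mvar_lift k a) (lift_m k v) (lift_m k u).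
Proof.
  revert k a v; induction u; intros; simpl.
  - reflexivity.
  - rewrite IHu, lift_l_lift_m; reflexivity.
  - f_equal; auto.
  - rewrite IHu, (lift_m_lift_m v 0 k) by lia.
    do 3 f_equal; unfold mvar_lift; index_cases.
  - fold (mvar_lift k n). rewrite mvar_lift_eqb.
    destruct (n =? a); simpl; rewrite IHu; reflexivity.
Qed.

Lemma subst_l_subst_l (u v w : term) (j k : nat) : j <= k ->
  subst_l k w (subst_l j v u) = subst_l j (subst_l k w v) (subst_l (S k) (lift_l j w) u).
Proof.
  revert j k v w; induction u; intros j k v w H; simpl.
  - index_cases. rewrite subst_l_lift_l; reflexivity.
  - f_equal. rewrite IHu, (lift_l_subst_l_le v _ 0 k), (lift_l_lift_l w 0 j) by lia; reflexivity.
  - f_equal; auto.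
  - f_equal. rewrite IHu, lift_m_subst_l, lift_l_lift_m by lia; reflexivity.
  - f_equal; auto.
Qed.

Lemma subst_l_subst_m (u v w : term) (k a : nat) :
  subst_l k (lift_m a w) (subst_m a v u)
  = subst_m a (subst_l k (lift_m a w) v) (subst_l k (lift_m a w) u).
Proof.
  revert k a v w; induction u; intros; simpl.
  - index_cases. rewrite subst_m_lift_m; reflexivity.
  - rewrite lift_l_lift_m, IHu, <- lift_l_lift_m, (lift_l_subst_l_le v _ 0 k) by lia.
    reflexivity.
  - f_equal; auto.
  - rewrite (lift_m_lift_m w 0 a), IHu, lift_m_subst_l, (lift_m_lift_m w 0 a) by lia.
    reflexivity.
  - destruct (n =? a); simpl; rewrite IHu; reflexivity.
Qed.

Lemma subst_m_subst_l (u v w : term) (k b : nat) :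
  subst_m b w (subst_l k v u) = subst_l k (subst_m b w v) (subst_m b (lift_l k w) u).
Proof.
  revert k b v w; induction u; intros; simpl.
  - index_cases.
  - rewrite IHu, lift_l_subst_m, (lift_l_lift_l w 0 k) by lia; reflexivity.
  - f_equal; auto.
  - rewrite IHu, (lift_m_subst_m v _ 0 b), lift_l_lift_m; reflexivity.
  - destruct (n =? b); simpl; rewrite IHu; try rewrite subst_l_lift_l; reflexivity.
Qed.

Lemma subst_m_subst_m (u v w : term) (a c : nat) : c <= a ->
  subst_m (S a) (lift_m c w) (subst_m c v u)
  = subst_m c (subst_m (S a) (lift_m c w) v) (subst_m (S a) (lift_m c w) u).
Proof.
  revert a c v w; induction u; intros a c v w H; simpl.
  - reflexivity.
  - rewrite lift_l_lift_m, IHu, lift_l_subst_m, lift_l_lift_m by lia; reflexivity.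
  - f_equal; auto.
  - rewrite (lift_m_lift_m w 0 c), IHu, (lift_m_subst_m v _ 0 (S a)),
      (lift_m_lift_m w 0 c) by lia; reflexivity.
  - repeat (match goal with |- context [?x =? ?y] => destruct (Nat.eqb_spec x y) end;
            simpl); try lia; subst; rewrite ?IHu, ?subst_m_lift_m by lia; reflexivity.
Qed.

Lemma step_lift_l (u u' : term) (k : nat) : step u u' -> step (lift_l k u) (lift_l k u').
Proof.
  intros H; revert k; induction H; intros; simpl; try (constructor; auto; fail).
  - rewrite (lift_l_subst_l_ge u v k 0) by lia; constructor.
  - rewrite lift_l_subst_m, lift_l_lift_m; constructor.
Qed.

Lemma step_lift_m (u u' : term) (k : nat) : step u u' -> step (lift_m k u) (lift_m k u').
Proof.
  intros H; revert k; induction H; intros; simpl; try (constructor; auto; fail).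
  - rewrite lift_m_subst_l; constructor.
  - rewrite lift_m_subst_m, <- (lift_m_lift_m v 0 k) by lia; constructor.
Qed.

Lemma step_subst_l (u u' w : term) (k : nat) :
  step u u' -> step (subst_l k w u) (subst_l k w u').
Proof.
  intros H; revert k w; induction H; intros; simpl; try (constructor; auto; fail).
  - rewrite (subst_l_subst_l u v w 0 k) by lia; constructor.
  - rewrite (subst_l_subst_m u _ w k 0), <- lift_m_subst_l; constructor.
Qed.

Lemma step_subst_m (u u' w : term) (b : nat) :
  step u u' -> step (subst_m b w u) (subst_m b w u').
Proof.
  intros H; revert b w; induction H; intros; simpl; try (constructor; auto; fail).
  - rewrite (subst_m_subst_l u v w 0 b); constructor.
  - rewrite (subst_m_subst_m u (lift_m 0 v) w b 0) by lia.
    replace (subst_m (S b) (lift_m 0 w) (lift_m 0 v)) with (lift_m 0 (subst_m b w v))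
      by (rewrite lift_m_subst_m; reflexivity).
    constructor.
  - destruct (a =? b); repeat constructor; auto.
Qed.

Lemma reduces_map (f : term -> term) :
  (forall u u', step u u' -> step (f u) (f u')) ->
  forall u u', reduces u u' -> reduces (f u) (f u').
Proof.
  intros Hf u u' H; induction H; [apply rt_step; auto | apply rt_refl | eapply rt_trans; eauto].
Qed.

Lemma reduces_lam (u u' : term) : reduces u u' -> reduces (Lam u) (Lam u').
Proof. apply reduces_map; intros; constructor; auto. Qed.

Lemma reduces_mu (u u' : term) : reduces u u' -> reduces (Mu u) (Mu u').
Proof. apply reduces_map; intros; constructor; auto. Qed.

Lemma reduces_named (b : nat) (u u' : term) : reduces u u' -> reduces (Named b u) (Named b u').
Proof. apply reduces_map; intros; constructor; auto. Qed.

Lemma reduces_app (u u' v v' : term) :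
  reduces u u' -> reduces v v' -> reduces (App u v) (App u' v').
Proof.
  intros Hu Hv; apply rt_trans with (App u' v).
  - apply (reduces_map (fun x => App x v)); [intros; apply step_appl |]; auto.
  - apply (reduces_map (fun x => App u' x)); [intros; apply step_appr |]; auto.
Qed.

Ltac destruct_ifs_in_hyps :=
  repeat match goal with H : context [if ?c then _ else _] |- _ => destruct c end.

Lemma step_subst_l_var_inv (u s' : term) (k j : nat) :
  step (subst_l k (Var j) u) s' -> exists u', step u u' /\ s' = subst_l k (Var j) u'.
Proof.
  revert k j s'; induction u as [n | u IHu | u1 IHu1 u2 IHu2 | u IHu | a u IHu];
    intros k j s' H; simpl in H.
  - destruct_ifs_in_hyps; inversion H.
  - change (lift_l 0 (Var j)) with (Var (S j)) in H.
    inversion H as [| | ? s Hs | | | |]; subst.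
    destruct (IHu _ _ _ Hs) as [u' [Hu' ?]]; subst.
    exists (Lam u'); split; [constructor |]; auto.
  - inversion H as [f v E | f v E | | f f' ? Hf | ? v v' Hv | |]; subst.
    + destruct u1; simpl in E; destruct_ifs_in_hyps; try discriminate.
      injection E; intros; subst.
      exists (subst_l 0 u2 u1); split; [constructor |].
      rewrite (subst_l_subst_l u1 u2 (Var j) 0 k) by lia; reflexivity.
    + destruct u1; simpl in E; destruct_ifs_in_hyps; try discriminate.
      injection E; intros; subst.
      exists (Mu (subst_m 0 (lift_m 0 u2) u1)); split; [constructor |].
      simpl; rewrite (subst_l_subst_m u1 _ (Var j) k 0), lift_m_subst_l; reflexivity.
    + destruct (IHu1 _ _ _ Hf) as [u' [Hu' ?]]; subst.
      exists (App u' u2); split; [constructor |]; auto.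
    + destruct (IHu2 _ _ _ Hv) as [u' [Hu' ?]]; subst.
      exists (App u1 u'); split; [constructor |]; auto.
  - inversion H as [| | | | | ? s Hs |]; subst.
    destruct (IHu _ _ _ Hs) as [u' [Hu' ?]]; subst.
    exists (Mu u'); split; [constructor |]; auto.
  - inversion H as [| | | | | | ? ? s Hs]; subst.
    destruct (IHu _ _ _ Hs) as [u' [Hu' ?]]; subst.
    exists (Named a u'); split; [constructor |]; auto.
Qed.

Lemma reduces_subst_l_var_inv (u n : term) (k j : nat) :
  reduces (subst_l k (Var j) u) n -> exists u', reduces u u' /\ n = subst_l k (Var j) u'.
Proof.
  intros H; apply clos_rt_rt1n in H.
  remember (subst_l k (Var j) u) as s eqn:E; revert u E.
  induction H as [| s s1 n Hs _ IH]; intros u ->.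
  - exists u; split; [apply rt_refl | reflexivity].
  - destruct (step_subst_l_var_inv _ _ _ _ Hs) as [u1 [Hu1 ->]].
    destruct (IH u1 eq_refl) as [u2 [Hu2 ->]].
    exists u2; split; [eapply rt_trans; [apply rt_step |] |]; eauto.
Qed.

Lemma normalizable_of_subst_l_var (u n : term) (k j : nat) :
  reduces (subst_l k (Var j) u) n -> normal n -> normalizable u.
Proof.
  intros Hr Hn; destruct (reduces_subst_l_var_inv _ _ _ _ Hr) as [u' [Hu' ?]]; subst.
  exists u'; split; auto.
  intros u'' Hs; exact (Hn _ (step_subst_l _ _ _ k Hs)).
Qed.

(** * Instances *)

Definition instantiation : Type := nat -> option nat.

Definition inst_under_lam (sg : instantiation) : instantiation :=
  fun b => option_map S (sg b).

Definition inst_under_mu (sg : instantiation) : instantiation :=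
  fun b => match b with 0 => None | S b' => sg b' end.

(* [instance sg u s]: [s] arises from [u] by performing the structural
   substitution [b :=* y] for each mu-variable [b] with [sg b = Some y], and
   then reducing each application [(w' y)] so created, arbitrarily far. *)
Inductive instance : instantiation -> term -> term -> Prop :=
| instance_var sg n : instance sg (Var n) (Var n)
| instance_lam sg u s : instance (inst_under_lam sg) u s -> instance sg (Lam u) (Lam s)
| instance_app sg u1 s1 u2 s2 :
    instance sg u1 s1 -> instance sg u2 s2 -> instance sg (App u1 u2) (App s1 s2)
| instance_mu sg u s : instance (inst_under_mu sg) u s -> instance sg (Mu u) (Mu s)
| instance_named sg b u s :
    sg b = None -> instance sg u s -> instance sg (Named b u) (Named b s)
| instance_unfold sg b y w w' r :
    sg b = Some y -> instance sg w w' -> reduces (App w' (Var y)) r ->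
    instance sg (Named b w) (Named b r).

Lemma instance_refl (sg : instantiation) (t : term) :
  (forall b, sg b = None) -> instance sg t t.
Proof.
  revert sg; induction t; intros sg H; constructor; auto.
  - apply IHt; intros; unfold inst_under_lam; rewrite H; reflexivity.
  - apply IHt; intros [|b]; simpl; auto.
Qed.

Lemma instance_lift_l (sg sg' : instantiation) (u s : term) (k : nat) :
  (forall b, sg' b = option_map (lvar_lift k) (sg b)) ->
  instance sg u s -> instance sg' (lift_l k u) (lift_l k s).
Proof.
  intros Hsg H; revert k sg' Hsg; induction H; intros k sg' Hsg; simpl.
  - destruct (n <? k); constructor.
  - constructor; apply IHinstance; intros b; unfold inst_under_lam; rewrite Hsg.
    destruct (sg b); simpl; auto; f_equal; unfold lvar_lift; index_cases.
  - constructor; auto.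
  - constructor; apply IHinstance; intros [|b]; simpl; auto.
  - constructor; auto; rewrite Hsg, H; reflexivity.
  - apply instance_unfold with (lvar_lift k y) (lift_l k w').
    + rewrite Hsg, H; reflexivity.
    + auto.
    + rewrite <- lift_l_var.
      apply (reduces_map (lift_l k) (fun a b h => step_lift_l a b k h) _ _ H1).
Qed.

Lemma instance_lift_m (sg sg' : instantiation) (u s : term) (k : nat) :
  (forall b, sg' (mvar_lift k b) = sg b) ->
  instance sg u s -> instance sg' (lift_m k u) (lift_m k s).
Proof.
  intros Hsg H; revert k sg' Hsg; induction H; intros k sg' Hsg; simpl.
  - constructor.
  - constructor; apply IHinstance; intros b; unfold inst_under_lam; rewrite Hsg; auto.
  - constructor; auto.
  - constructor; apply IHinstance; intros [|b]; [reflexivity |].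
    replace (mvar_lift (S k) (S b)) with (S (mvar_lift k b))
      by (unfold mvar_lift; index_cases).
    simpl; auto.
  - fold (mvar_lift k b); constructor; auto; rewrite Hsg; auto.
  - fold (mvar_lift k b); apply instance_unfold with y (lift_m k w').
    + rewrite Hsg; auto.
    + auto.
    + apply (reduces_map (lift_m k) (fun a b h => step_lift_m a b k h) _ _ H1).
Qed.

Lemma instance_subst_l (sg tau : instantiation) (u s v v' : term) (k : nat) :
  (forall c, sg c = option_map (lvar_lift k) (tau c)) ->
  instance sg u s -> instance tau v v' -> instance tau (subst_l k v u) (subst_l k v' s).
Proof.
  intros Hsg H; revert k tau v v' Hsg; induction H; intros k tau v v' Hsg Hv; simpl.
  - destruct (n <? k); [constructor |]; destruct (n =? k); [auto | constructor].
  - constructor; apply IHinstance.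
    + intros c; unfold inst_under_lam; rewrite Hsg; destruct (tau c); simpl; auto.
      f_equal; unfold lvar_lift; index_cases.
    + eapply instance_lift_l; [| exact Hv].
      intros b; unfold inst_under_lam; destruct (tau b); reflexivity.
  - constructor; auto.
  - constructor; apply IHinstance.
    + intros [|c]; simpl; auto.
    + apply instance_lift_m with (sg := tau); auto.
  - constructor; auto. rewrite Hsg in H; destruct (tau b); simpl in H; congruence.
  - rewrite Hsg in H; destruct (tau b) as [y0|] eqn:E; simpl in H; inversion H; subst.
    apply instance_unfold with y0 (subst_l k v' w'); auto.
    assert (Hy0 : Var y0 = subst_l k v' (Var (lvar_lift k y0)))
      by (rewrite <- lift_l_var, subst_l_lift_l; reflexivity).
    rewrite Hy0.
    apply (reduces_map (subst_l k v') (fun a b h => step_subst_l a b v' k h) _ _ H1).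
Qed.

Lemma instance_subst_m (sg : instantiation) (u s v v' : term) (c : nat) :
  sg c = None -> instance sg u s -> instance sg v v' ->
  instance sg (subst_m c v u) (subst_m c v' s).
Proof.
  intros Hc H; revert c v v' Hc; induction H; intros c v v' Hc Hv; simpl.
  - constructor.
  - constructor; apply IHinstance.
    + unfold inst_under_lam; rewrite Hc; reflexivity.
    + eapply instance_lift_l; [| exact Hv].
      intros b; unfold inst_under_lam; destruct (sg b); reflexivity.
  - constructor; auto.
  - constructor; apply IHinstance; auto.
    eapply instance_lift_m; [| exact Hv]; reflexivity.
  - destruct (b =? c); constructor; auto; constructor; auto.
  - destruct (Nat.eqb_spec b c); [subst; congruence |].
    apply instance_unfold with y (subst_m c v' w'); auto.
    apply (reduces_map (subst_m c v') (fun a b h => step_subst_m a b v' c h) _ _ H1).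
Qed.

(* Performing [c :=* y] on the instance side amounts to adding [c := y] to the
   instantiation, the new applications being left unreduced. *)
Lemma instance_subst_m_var (sg sg' : instantiation) (u s : term) (c y : nat) :
  sg c = None -> (forall d, sg' d = if d =? c then Some y else sg d) ->
  instance sg u s -> instance sg' u (subst_m c (Var y) s).
Proof.
  intros Hc Hsg H; revert c y sg' Hc Hsg; induction H; intros c z sg' Hc Hsg; simpl.
  - constructor.
  - constructor; change (lift_l 0 (Var z)) with (Var (S z)); apply IHinstance.
    + unfold inst_under_lam; rewrite Hc; reflexivity.
    + intros d; unfold inst_under_lam; rewrite Hsg; destruct (d =? c); reflexivity.
  - constructor; auto.
  - constructor; apply IHinstance; auto; intros [|d]; simpl; rewrite ?Hsg; reflexivity.
  - destruct (Nat.eqb_spec b c) as [-> | Hbc].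
    + apply instance_unfold with z (subst_m c (Var z) s); auto.
      * rewrite Hsg, Nat.eqb_refl; reflexivity.
      * apply rt_refl.
    + constructor; auto. rewrite Hsg; apply Nat.eqb_neq in Hbc; rewrite Hbc; auto.
  - destruct (Nat.eqb_spec b c) as [-> | Hbc]; [congruence |].
    apply instance_unfold with y (subst_m c (Var z) w'); auto.
    + rewrite Hsg; apply Nat.eqb_neq in Hbc; rewrite Hbc; auto.
    + apply (reduces_map (subst_m c (Var z)) (fun a b h => step_subst_m a b _ c h) _ _ H1).
Qed.

Lemma instance_lam_inv (sg : instantiation) (u s : term) :
  instance sg u (Lam s) -> exists u0, u = Lam u0 /\ instance (inst_under_lam sg) u0 s.
Proof. intros H; inversion H; subst; eauto. Qed.

Lemma instance_mu_inv (sg : instantiation) (u s : term) :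
  instance sg u (Mu s) -> exists u0, u = Mu u0 /\ instance (inst_under_mu sg) u0 s.
Proof. intros H; inversion H; subst; eauto. Qed.

Lemma instance_app_inv (sg : instantiation) (u s1 s2 : term) :
  instance sg u (App s1 s2) ->
  exists u1 u2, u = App u1 u2 /\ instance sg u1 s1 /\ instance sg u2 s2.
Proof. intros H; inversion H; subst; eauto. Qed.

(** * Simulation *)

Lemma instance_step_sim (sg : instantiation) (u s s' : term) :
  step s s' -> instance sg u s -> exists u', reduces u u' /\ instance sg u' s'.
Proof.
  intros Hs; revert sg u; induction Hs; intros sg w Hw.
  - destruct (instance_app_inv _ _ _ _ Hw) as [f [a [-> [Hf Ha]]]].
    destruct (instance_lam_inv _ _ _ Hf) as [b [-> Hb]].
    exists (subst_l 0 a b); split; [apply rt_step; constructor |].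
    apply instance_subst_l with (inst_under_lam sg); auto.
  - destruct (instance_app_inv _ _ _ _ Hw) as [f [a [-> [Hf Ha]]]].
    destruct (instance_mu_inv _ _ _ Hf) as [b [-> Hb]].
    exists (Mu (subst_m 0 (lift_m 0 a) b)); split; [apply rt_step; constructor |].
    constructor; apply instance_subst_m; auto.
    eapply instance_lift_m; [| exact Ha]; reflexivity.
  - destruct (instance_lam_inv _ _ _ Hw) as [b [-> Hb]].
    destruct (IHHs _ _ Hb) as [b' [? ?]].
    exists (Lam b'); split; [apply reduces_lam | constructor]; auto.
  - destruct (instance_app_inv _ _ _ _ Hw) as [f [a [-> [Hf Ha]]]].
    destruct (IHHs _ _ Hf) as [f' [? ?]].
    exists (App f' a); split; [apply reduces_app; [| apply rt_refl] | constructor]; auto.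
  - destruct (instance_app_inv _ _ _ _ Hw) as [f [a [-> [Hf Ha]]]].
    destruct (IHHs _ _ Ha) as [a' [? ?]].
    exists (App f a'); split; [apply reduces_app; [apply rt_refl |] | constructor]; auto.
  - destruct (instance_mu_inv _ _ _ Hw) as [b [-> Hb]].
    destruct (IHHs _ _ Hb) as [b' [? ?]].
    exists (Mu b'); split; [apply reduces_mu | constructor]; auto.
  - inversion Hw as [| | | | ? ? b ? Hnone Hb | ? ? y b b' ? Hsome Hb Hr]; subst.
    + destruct (IHHs _ _ Hb) as [b1 [? ?]].
      exists (Named a b1); split; [apply reduces_named | constructor]; auto.
    + exists (Named a b); split; [apply rt_refl |].
      apply instance_unfold with y b'; auto.
      eapply rt_trans; [exact Hr | apply rt_step; exact Hs].
Qed.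

Lemma instance_reduces_sim (sg : instantiation) (u s s' : term) :
  reduces s s' -> instance sg u s -> exists u', reduces u u' /\ instance sg u' s'.
Proof.
  intros Hs; revert u; induction Hs as [s s' Hs | s | s s1 s' _ IH1 _ IH2]; intros u Hu.
  - eapply instance_step_sim; eauto.
  - exists u; split; [apply rt_refl | exact Hu].
  - destruct (IH1 _ Hu) as [u1 [Hu1 H1]].
    destruct (IH2 _ H1) as [u2 [Hu2 H2]].
    exists u2; split; [eapply rt_trans |]; eauto.
Qed.

(** * Normal forms *)

Fixpoint size (t : term) : nat :=
  match t with
  | Var _ => 1
  | Lam u | Mu u | Named _ u => S (size u)
  | App u v => S (size u + size v)
  end.

Definition abstraction (t : term) : bool :=
  match t with Lam _ | Mu _ => true | _ => false end.

Lemma normal_lam_iff (m : term) : normal (Lam m) <-> normal m.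
Proof.
  split; intros H t' Hs.
  - apply (H (Lam t')); constructor; auto.
  - inversion Hs; subst; eapply H; eauto.
Qed.

Lemma normal_mu_iff (m : term) : normal (Mu m) <-> normal m.
Proof.
  split; intros H t' Hs.
  - apply (H (Mu t')); constructor; auto.
  - inversion Hs; subst; eapply H; eauto.
Qed.

Lemma normal_named_iff (b : nat) (m : term) : normal (Named b m) <-> normal m.
Proof.
  split; intros H t' Hs.
  - apply (H (Named b t')); constructor; auto.
  - inversion Hs; subst; eapply H; eauto.
Qed.

Lemma normal_app_iff (m1 m2 : term) :
  normal (App m1 m2) <-> normal m1 /\ normal m2 /\ abstraction m1 = false.
Proof.
  split.
  - intros H; split; [| split].
    + intros t' Hs; apply (H (App t' m2)); constructor; auto.
    + intros t' Hs; apply (H (App m1 t')); constructor; auto.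
    + destruct m1; try reflexivity; exfalso; eapply H; constructor.
  - intros [H1 [H2 Habs]] t' Hs; inversion Hs; subst; try discriminate;
      [eapply H1 | eapply H2]; eauto.
Qed.

Lemma app_var_reduces_inv (w r : term) (y : nat) :
  reduces (App w (Var y)) r ->
  (exists w', reduces w w' /\ r = App w' (Var y)) \/
  (exists p, reduces w (Lam p) /\ reduces (subst_l 0 (Var y) p) r) \/
  (exists p, reduces w (Mu p) /\ reduces (Mu (subst_m 0 (Var y) p)) r).
Proof.
  intros H; apply clos_rt_rt1n in H.
  remember (App w (Var y)) as s eqn:E; revert w E.
  induction H as [| s s1 r Hs Hr IH]; intros w ->.
  - left; exists w; split; [apply rt_refl | reflexivity].
  - apply clos_rt1n_rt in Hr.
    inversion Hs as [p | p | | ? w1 ? Hw | ? ? v Hv | |]; subst.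
    + right; left; exists p; split; [apply rt_refl | exact Hr].
    + right; right; exists p; split; [apply rt_refl | exact Hr].
    + assert (Hww1 : reduces w w1) by (apply rt_step; exact Hw).
      destruct (IH w1 eq_refl) as [[w' [Hw' ->]] | [[p [Hp Hr']] | [p [Hp Hr']]]].
      * left; exists w'; split; [eapply rt_trans |]; eauto.
      * right; left; exists p; split; [eapply rt_trans |]; eauto.
      * right; right; exists p; split; [eapply rt_trans |]; eauto.
    + inversion Hv.
Qed.

Lemma mu_reduces_inv (u r : term) :
  reduces (Mu u) r -> exists r', r = Mu r' /\ reduces u r'.
Proof.
  intros H; apply clos_rt_rt1n in H.
  remember (Mu u) as s eqn:E; revert u E.
  induction H as [| s s1 r Hs _ IH]; intros u ->.
  - exists u; split; [reflexivity | apply rt_refl].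
  - inversion Hs as [| | | | | ? u1 Hu |]; subst.
    destruct (IH u1 eq_refl) as [r' [-> Hr']].
    exists r'; split; [reflexivity | eapply rt_trans; [apply rt_step |]; eauto].
Qed.

Definition reflects_normal_forms_upto (N : nat) : Prop :=
  forall sg u s n, instance sg u s -> reduces s n -> normal n -> size n <= N ->
  exists m, reduces u m /\ normal m /\ abstraction m = abstraction n.

Lemma normalizable_of_app_var_instance (N : nat) (sg : instantiation) (w w' r : term) (y : nat) :
  reflects_normal_forms_upto N -> instance sg w w' ->
  reduces (App w' (Var y)) r -> normal r -> size r <= N -> normalizable w.
Proof.
  intros HN Hw Hr Hn Hsize.
  destruct (app_var_reduces_inv _ _ _ Hr) as [[w'' [Hw'' ->]] | [[p [Hp Hr']] | [p [Hp Hr']]]].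
  - apply normal_app_iff in Hn as [Hn _].
    destruct (HN _ _ _ _ Hw Hw'' Hn) as [m [? [? _]]]; [simpl in Hsize; lia |].
    exists m; auto.
  - destruct (instance_reduces_sim _ _ _ _ Hp Hw) as [w1 [Hw1 Hl]].
    destruct (instance_lam_inv _ _ _ Hl) as [u [-> Hu]].
    assert (Hsub : instance sg (subst_l 0 (Var y) u) (subst_l 0 (Var y) p))
      by (apply instance_subst_l with (inst_under_lam sg); auto; constructor).
    destruct (HN _ _ _ _ Hsub Hr' Hn Hsize) as [m [Hm [Hmn _]]].
    destruct (normalizable_of_subst_l_var _ _ _ _ Hm Hmn) as [m' [Hm' Hm'n]].
    exists (Lam m'); split.
    + eapply rt_trans; [exact Hw1 | apply reduces_lam; exact Hm'].
    + apply normal_lam_iff; exact Hm'n.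
  - destruct (instance_reduces_sim _ _ _ _ Hp Hw) as [w1 [Hw1 Hmu]].
    destruct (instance_mu_inv _ _ _ Hmu) as [u [-> Hu]].
    destruct (mu_reduces_inv _ _ Hr') as [r' [-> Hr'']].
    assert (Hsub : instance (fun d => if d =? 0 then Some y else inst_under_mu sg d)
                            u (subst_m 0 (Var y) p))
      by (apply instance_subst_m_var with (inst_under_mu sg); auto).
    rewrite normal_mu_iff in Hn.
    destruct (HN _ _ _ _ Hsub Hr'' Hn) as [m [Hm [Hmn _]]]; [simpl in Hsize; lia |].
    exists (Mu m); split.
    + eapply rt_trans; [exact Hw1 | apply reduces_mu; exact Hm].
    + apply normal_mu_iff; exact Hmn.
Qed.

Lemma instance_normal_reflect (N : nat) (sg : instantiation) (u n : term) :
  (forall N', N' < N -> reflects_normal_forms_upto N') ->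
  instance sg u n -> normal n -> size n <= N ->
  exists m, reduces u m /\ normal m /\ abstraction m = abstraction n.
Proof.
  intros IH H; induction H as [sg x | sg u s _ IHs | sg u1 s1 u2 s2 _ IH1 _ IH2
    | sg u s _ IHs | sg b u s _ _ IHs | sg b y w w' r _ Hw _ Hr];
    intros Hn Hsize; simpl in Hsize.
  - exists (Var x); split; [apply rt_refl | split; auto].
  - destruct IHs as [m [? [? _]]]; [apply normal_lam_iff; exact Hn | lia |].
    exists (Lam m); split; [apply reduces_lam | split; [apply normal_lam_iff |]]; auto.
  - apply normal_app_iff in Hn as [Hn1 [Hn2 Habs]].
    destruct IH1 as [m1 [? [? Habs1]]]; [exact Hn1 | lia |].
    destruct IH2 as [m2 [? [? _]]]; [exact Hn2 | lia |].
    exists (App m1 m2); split; [apply reduces_app | split; [apply normal_app_iff |]]; auto.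
    rewrite Habs1; auto.
  - destruct IHs as [m [? [? _]]]; [apply normal_mu_iff; exact Hn | lia |].
    exists (Mu m); split; [apply reduces_mu | split; [apply normal_mu_iff |]]; auto.
  - destruct IHs as [m [? [? _]]]; [rewrite normal_named_iff in Hn; exact Hn | lia |].
    exists (Named b m); split; [apply reduces_named | split; [apply normal_named_iff |]]; auto.
  - rewrite normal_named_iff in Hn.
    destruct (normalizable_of_app_var_instance (size r) sg w w' r y
                (IH (size r) ltac:(lia)) Hw Hr Hn (le_n _)) as [m [? ?]].
    exists (Named b m); split; [apply reduces_named | split; [apply normal_named_iff |]]; auto.
Qed.

Lemma reflects_normal_forms (N : nat) : reflects_normal_forms_upto N.
Proof.
  induction N as [N IH] using (well_founded_induction lt_wf).
  intros sg u s n Hs Hr Hn Hsize.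
  destruct (instance_reduces_sim _ _ _ _ Hr Hs) as [u' [Hu' Hn']].
  destruct (instance_normal_reflect N _ _ _ IH Hn' Hn Hsize) as [m [? ?]].
  exists m; split; [eapply rt_trans |]; eauto.
Qed.

Theorem mainTheorem13 (t : term) (y : nat) :
  normalizable (App t (Var y)) -> normalizable t.
Proof.
  intros [n [Hr Hn]].
  apply (normalizable_of_app_var_instance (size n) (fun _ => None) t t n y);
    auto using reflects_normal_forms, instance_refl.
Qed.
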